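(* Let $P\subset\mathbb{R}^n$ be an $n$-dimensional smooth lattice polytope. Then (1) $\operatorname{codeg}(P)=\operatorname{codeg}_{\mathbb{Q}}(P)=\tau(P)=n+1$ if and only if $P=\Delta_n$; (2) if $P\neq\Delta_n$, then $\operatorname{codeg}_{\mathbb{Q}}(P)\le\tau(P)\le n$.
   Context: $\Delta_n$ denotes the standard $n$-dimensional simplex $\operatorname{Conv}\{0,e_1,\ldots,e_n\}$; lattice polytopes are considered up to lattice (affine unimodular) equivalence. Write $P=\bigcap_{i=1}^r\{x:\langle\rho_i,x\rangle\ge -a_i\}$ with primitive inner facet normals $\rho_i$ and $a_i\in\mathbb{Z}$; $P$ is smooth if each vertex lies on exactly $n$ facet hyperplanes whose normals form a basis of $\mathbb{Z}^n$. $P^{(s)}=\bigcap_i\{\langle\rho_i,x\rangle\ge -a_i+s\}$. For a vertex $m$ with $\{m\}=\bigcap_{i=1}^n\{\langle\rho_i,x\rangle=-a_i\}$, $m(s)$ is defined by $\{m(s)\}=\bigcap_{i=1}^n\{\langle\rho_i,x\rangle=-a_i+s\}$; $P$ is $s$-spanned if $m(s)\in P^{(s)}$ for all vertices $m$. $\operatorname{codeg}(P)=\min\{k\in\mathbb{N}:(kP)^{(1)}\cap\mathbb{Z}^n\ne\emptyset\}$; $\operatorname{codeg}_{\mathbb{Q}}(P)=\inf\{a/b:(aP)^{(b)}\neq\emptyset\}$; $\tau(P)=\inf\{a/b: aP\text{ is }b\text{-spanned}\}$ ($a,b$ positive integers). *)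

From HB Require Import structures.
From mathcomp Require Import all_boot all_order all_algebra.
From mathcomp Require Import boolp classical_sets reals.
Set Implicit Arguments. Unset Strict Implicit. Unset Printing Implicit Defensive.
Import Order.TTheory GRing.Theory Num.Theory.
Local Open Scope ring_scope.
Local Open Scope classical_set_scope.

(* Points of R^n are row vectors 'rV[R]_n; lattice vectors / facet normals are
   row vectors 'rV[int]_n.  A polytope is given by its facet presentation
   P = \bigcap_{i<r} { x | <rho_i, x> >= - a_i }.                            *)

Definition dotz (R : realType) (n : nat) (v : 'rV[int]_n) (x : 'rV[R]_n) : R :=
  \sum_(j < n) (v 0 j)%:~R * x 0 j.

Definition zpt (R : realType) (n : nat) (z : 'rV[int]_n) : 'rV[R]_n :=
  map_mx (fun k : int => k%:~R) z.
Arguments zpt R {n} z.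

Definition Hpoly (R : realType) (n r : nat) (rho : 'I_r -> 'rV[int]_n)
  (c : 'I_r -> R) : set 'rV[R]_n :=
  [set x | forall i, - c i <= dotz (rho i) x].

(* the facet offsets of the dilation k P shifted by s:
   (kP)^(s) = { x | <rho_i,x> >= - k a_i + s } *)
Definition offs (R : realType) (r : nat) (a : 'I_r -> int) (k s : R) : 'I_r -> R :=
  fun i => k * (a i)%:~R - s.

Definition Ppoly (R : realType) (n r : nat) (rho : 'I_r -> 'rV[int]_n)
  (a : 'I_r -> int) : set 'rV[R]_n := Hpoly rho (offs a 1 0).
Arguments Ppoly R {n r} rho a.

Definition conv (R : realType) (n k : nat) (p : 'I_k -> 'rV[R]_n) : set 'rV[R]_n :=
  [set x | exists l : 'I_k -> R, (forall j, 0 <= l j) /\ \sum_(j < k) l j = 1 /\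
           x = \sum_(j < k) l j *: p j].

Definition vertex (R : realType) (n : nat) (S : set 'rV[R]_n) (m : 'rV[R]_n) : Prop :=
  S m /\ forall x y, S x -> S y -> m = 2^-1 *: (x + y) -> x = y.

Definition primitive (n : nat) (v : 'rV[int]_n) : Prop :=
  forall d : int, (forall j, (d %| v ord0 j)%Z) -> `|d| = 1.

Definition facet_presentation (R : realType) (n r : nat)
  (rho : 'I_r -> 'rV[int]_n) (a : 'I_r -> int) : Prop :=
  (forall i, primitive (rho i)) /\
  (forall i, exists x : 'rV[R]_n,
      (forall j, j != i -> - (a j)%:~R <= dotz (rho j) x) /\
      dotz (rho i) x < - (a i)%:~R).

Definition full_dim (R : realType) (n r : nat) (rho : 'I_r -> 'rV[int]_n)
  (a : 'I_r -> int) : Prop :=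
  exists x : 'rV[R]_n, forall i, - (a i)%:~R < dotz (rho i) x.

Definition lattice_polytope (R : realType) (n : nat) (P : set 'rV[R]_n) : Prop :=
  exists (k : nat) (V : 'I_k -> 'rV[int]_n), P = conv (fun j => zpt R (V j)).

Definition tight (R : realType) (n r : nat) (rho : 'I_r -> 'rV[int]_n)
  (c : 'I_r -> R) (m : 'rV[R]_n) : {set 'I_r} :=
  [set i | dotz (rho i) m == - c i].

Definition Zbasis (n r : nat) (rho : 'I_r -> 'rV[int]_n) (T : {set 'I_r}) : Prop :=
  (forall v : 'rV[int]_n, exists l : 'I_r -> int, v = \sum_(i in T) l i *: rho i) /\
  (forall l : 'I_r -> int, \sum_(i in T) l i *: rho i = 0 -> forall i, i \in T -> l i = 0).

Definition smooth (R : realType) (n r : nat) (rho : 'I_r -> 'rV[int]_n)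
  (a : 'I_r -> int) : Prop :=
  forall m, vertex (Ppoly R rho a) m ->
    #|tight rho (offs a 1 0) m| = n /\ Zbasis rho (tight rho (offs a 1 0) m).

(* the polytope with offsets c (facet presentation (rho,c)) is s-spanned:
   for every vertex m, the point m(s) (the solution of <rho_i,y> = -c_i + s for
   the facets i through m) lies in the shifted polytope { <rho_i,y> >= -c_i+s } *)
Definition spanned (R : realType) (n r : nat) (rho : 'I_r -> 'rV[int]_n)
  (c : 'I_r -> R) (s : R) : Prop :=
  forall m, vertex (Hpoly rho c) m ->
    forall y : 'rV[R]_n,
      (forall i, i \in tight rho c m -> dotz (rho i) y = - c i + s) ->
      Hpoly rho (fun i => c i - s) y.

Definition codeg (R : realType) (n r : nat) (rho : 'I_r -> 'rV[int]_n)
  (a : 'I_r -> int) : R :=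
  inf [set q : R | exists k : nat, q = k%:R /\
        exists z : 'rV[int]_n, Hpoly rho (offs a k%:R 1) (zpt R z)].

Definition codegQ (R : realType) (n r : nat) (rho : 'I_r -> 'rV[int]_n)
  (a : 'I_r -> int) : R :=
  inf [set q : R | exists p b : nat, (0 < p)%N /\ (0 < b)%N /\ q = p%:R / b%:R /\
        exists x : 'rV[R]_n, Hpoly rho (offs a p%:R b%:R) x].

Definition tau (R : realType) (n r : nat) (rho : 'I_r -> 'rV[int]_n)
  (a : 'I_r -> int) : R :=
  inf [set q : R | exists p b : nat, (0 < p)%N /\ (0 < b)%N /\ q = p%:R / b%:R /\
        spanned rho (offs a (p%:R : R) 0) (b%:R : R)].

(* standard simplex Delta_n = Conv{0, e_1, ..., e_n} *)
Definition simplex_pts (R : realType) (n : nat) (j : 'I_n.+1) : 'rV[R]_n :=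
  match unlift ord0 j with
  | None => 0
  | Some i => delta_mx 0 i
  end.

Definition simplex (R : realType) (n : nat) : set 'rV[R]_n := conv (@simplex_pts R n).
Arguments simplex R n : clear implicits.

Definition lattice_equiv (R : realType) (n : nat) (P Q : set 'rV[R]_n) : Prop :=
  exists (U : 'M[int]_n) (t : 'rV[int]_n), U \in unitmx /\
    [set x *m map_mx (fun k : int => k%:~R) U + zpt R t | x in P] = Q.

Arguments facet_presentation R {n r} rho a.
Arguments full_dim R {n r} rho a.
Arguments smooth R {n r} rho a.
Arguments codeg R {n r} rho a.
Arguments codegQ R {n r} rho a.
Arguments tau R {n r} rho a.

From HB Require Import structures.
From mathcomp Require Import all_boot all_order all_algebra.
From mathcomp Require Import boolp classical_sets reals.
From mathcomp Require Import ring lra zify.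
Import Order.TTheory GRing.Theory Num.Theory.
Local Open Scope ring_scope.
Set Implicit Arguments. Unset Strict Implicit. Unset Printing Implicit Defensive.

(* At a vertex [m] of a smooth lattice polytope the normals of the facets
   through [m] form a lattice basis, and the dual basis [u t] spans the edges
   at [m].  Every edge has lattice length at least one, its far end being
   again a lattice vertex; so if [D i] is the lattice distance from [m] to the
   facet [i], then [D i + <rho i, u t> >= 0] for all [t] and hence
   [(n+1) D i + sum_t <rho i, u t> >= 1], which says that [(n+1) P] is
   1-spanned.  The sum is even [>= 1 - n D i], making [n P] 1-spanned, unless
   some facet [i] is opposite to [m], i.e. every edge from [m] ends on it.
   Primitivity then gives [rho i = - sum_t rho t]: [P] is the unimodular
   simplex, and summing the inequalities of [(pP)^(b)] over these [n+1]
   facets gives [(n+1) b <= p].  Conversely, if [P] is a lattice simplex, at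
   the vertex mapped to the origin every [u t] maps to a nonzero lattice point
   of the simplex, of coordinate sum one; without an opposite facet [P] would
   contain [m + s sum_t u t] for some [s > 1/n], whose image has coordinate
   sum [s n > 1]. *)

Section IntegerDot.
Variable n : nat.
Implicit Types v w : 'rV[int]_n.

Definition idot v w : int := \sum_(j < n) v 0 j * w 0 j.

Lemma idotDl v v' w : idot (v + v') w = idot v w + idot v' w.
Proof. by rewrite /idot -big_split; apply: eq_bigr => j _; rewrite mxE mulrDl. Qed.

Lemma idotZl k v w : idot (k *: v) w = k * idot v w.
Proof. by rewrite /idot mulr_sumr; apply: eq_bigr => j _; rewrite mxE mulrA. Qed.

Lemma idot_suml (I : finType) (P : pred I) (F : I -> 'rV[int]_n) w :
  idot (\sum_(i | P i) F i) w = \sum_(i | P i) idot (F i) w.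
Proof.
apply: (big_morph (idot^~ w) (fun v v' => idotDl v v' w)).
by rewrite /idot big1 // => j _; rewrite mxE mul0r.
Qed.

End IntegerDot.

Section DotProduct.
Variables (R : realType) (n : nat).
Implicit Types (v w : 'rV[int]_n) (x y : 'rV[R]_n).

Lemma dotzD v x y : dotz v (x + y) = dotz v x + dotz v y.
Proof. by rewrite /dotz -big_split; apply: eq_bigr => j _; rewrite mxE mulrDr. Qed.

Lemma dotz0 v : dotz v (0 : 'rV[R]_n) = 0.
Proof. by rewrite /dotz big1 // => j _; rewrite mxE mulr0. Qed.

Lemma dotzZ v c x : dotz v (c *: x) = c * dotz v x.
Proof. by rewrite /dotz mulr_sumr; apply: eq_bigr => j _; rewrite mxE mulrCA. Qed.

Lemma dotzB v x y : dotz v (x - y) = dotz v x - dotz v y.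
Proof. by rewrite dotzD -scaleN1r dotzZ mulN1r. Qed.

Lemma dotz_sum v (I : finType) (P : pred I) (F : I -> 'rV[R]_n) :
  dotz v (\sum_(i | P i) F i) = \sum_(i | P i) dotz v (F i).
Proof. exact: (big_morph (dotz v) (dotzD v) (dotz0 v)). Qed.

Lemma dotz_zpt v w : dotz v (zpt R w) = (idot v w)%:~R.
Proof.
by rewrite /dotz /idot rmorph_sum; apply: eq_bigr => j _; rewrite mxE /= intrM.
Qed.

Lemma dotzDl v w x : dotz (v + w) x = dotz v x + dotz w x.
Proof. by rewrite /dotz -big_split; apply: eq_bigr => j _; rewrite mxE intrD mulrDl. Qed.

Lemma dotzNl v x : dotz (- v) x = - dotz v x.
Proof. by rewrite /dotz -sumrN; apply: eq_bigr => j _; rewrite mxE intrN mulNr. Qed.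

Lemma dotz_suml (I : finType) (P : pred I) (F : I -> 'rV[int]_n) x :
  dotz (\sum_(i | P i) F i) x = \sum_(i | P i) dotz (F i) x.
Proof.
have dotz0l : dotz (0 : 'rV[int]_n) x = 0.
  by rewrite /dotz big1 // => j _; rewrite mxE mul0r.
exact: (big_morph (fun v => dotz v x) (fun v w => dotzDl v w x) dotz0l).
Qed.

Lemma zptD v w : zpt R (v + w) = zpt R v + zpt R w.
Proof. by apply/matrixP => i j; rewrite !mxE intrD. Qed.

Lemma zptZ (k : int) v : zpt R (k *: v) = k%:~R *: zpt R v.
Proof. by apply/matrixP => i j; rewrite !mxE intrM. Qed.

Lemma zpt_sum (I : finType) (P : pred I) (F : I -> 'rV[int]_n) :
  zpt R (\sum_(i | P i) F i) = \sum_(i | P i) zpt R (F i).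
Proof.
by apply: (big_morph (zpt R) zptD); apply/matrixP => i j; rewrite !mxE.
Qed.

Lemma zpt_mulmx v (U : 'M[int]_n) :
  zpt R v *m map_mx (fun k : int => k%:~R) U = zpt R (v *m U).
Proof.
apply/matrixP => i j; rewrite !mxE rmorph_sum.
by apply: eq_bigr => k _; rewrite !mxE /= intrM.
Qed.

End DotProduct.

Lemma big_cast_ord (V : nmodType) (m k : nat) (e : m = k) (G : 'I_m -> V) :
  \sum_(i < m) G i = \sum_(j < k) G (cast_ord (esym e) j).
Proof. by subst; apply: eq_bigr => j _; rewrite cast_ord_id. Qed.

(* [u t] collects the [t]-th coordinates of the unit vectors in the basis
   [rho]; duality then follows from the uniqueness of these coordinates. *)
Lemma Zbasis_dual (R : realType) (n r : nat) (rho : 'I_r -> 'rV[int]_n)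
    (T : {set 'I_r}) :
  Zbasis rho T -> exists u : 'I_r -> 'rV[int]_n,
  [/\ forall s t, s \in T -> t \in T -> idot (rho s) (u t) = (s == t)%:R,
      forall x : 'rV[R]_n, x = \sum_(t in T) dotz (rho t) x *: zpt R (u t) &
      forall v, v = \sum_(t in T) idot v (u t) *: rho t].
Proof.
case=> span indep.
have [L HL] : exists L : 'I_n -> 'I_r -> int,
    forall k, delta_mx 0 k = \sum_(i in T) L k i *: rho i.
  exact: (fin_all_exists (fun k => span (delta_mx 0 k))).
pose u t : 'rV[int]_n := \row_k L k t.
have HLe k j : (delta_mx 0 k : 'rV[int]_n) 0 j = \sum_(i in T) L k i * rho i 0 j.
  by rewrite (HL k) summxE; apply: eq_bigr => i _; rewrite mxE.
have dual s t : s \in T -> t \in T -> idot (rho s) (u t) = (s == t)%:R.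
  move=> sT tT; pose l i := idot (rho s) (u i) - (s == i)%:R.
  suff /(indep l)/(_ t tT)/eqP : \sum_(i in T) l i *: rho i = 0.
    by rewrite subr_eq0 => /eqP.
  rewrite /l; under eq_bigr do rewrite scalerBl.
  rewrite sumrB; have -> : \sum_(i in T) (s == i)%:R *: rho i = rho s.
    rewrite (bigD1 s) //= eqxx scale1r big1 ?addr0 // => i /andP[_ ni].
    by rewrite eq_sym (negbTE ni) scale0r.
  apply/eqP; rewrite subr_eq0; apply/eqP.
  rewrite [in RHS](row_sum_delta (rho s)).
  under [in RHS]eq_bigr do rewrite HL scaler_sumr.
  rewrite exchange_big /=; apply: eq_bigr => i _.
  by rewrite /idot scaler_suml; apply: eq_bigr => k _; rewrite mxE scalerA.
exists u; split => //.
  move=> x; apply/matrixP => i k; rewrite (ord1 i) summxE.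
  under eq_bigr do rewrite !mxE.
  rewrite /dotz; under eq_bigr do rewrite mulr_suml.
  rewrite exchange_big /=.
  have col j : \sum_(t in T) (rho t 0 j)%:~R * (u t 0 k)%:~R = ((j == k)%:R : R).
    have := congr1 (fun z : int => (z%:~R : R)) (HLe k j).
    rewrite /= mxE eqxx /= eq_sym rmorph_nat rmorph_sum => ->.
    by apply: eq_bigr => t _; rewrite mxE /= intrM mulrC.
  transitivity (\sum_(j < n) x 0 j * (j == k)%:R).
    rewrite (bigD1 k) //= eqxx mulr1 big1 ?addr0 // => j /negbTE->.
    by rewrite mulr0.
  apply: eq_bigr => j _; rewrite -(col j) mulr_sumr; apply: eq_bigr => t _.
  by rewrite mxE mulrCA mulrA.
move=> v; have [l ->] := span v.
apply: eq_bigr => t tT; congr (_ *: _).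
rewrite idot_suml (bigD1 t) //= idotZl dual // eqxx mulr1 big1 ?addr0 //.
by move=> i /andP[iT ni]; rewrite idotZl dual // (negbTE ni) mulr0.
Qed.

Section ConvexHull.
Variables (R : realType) (n k : nat) (p : 'I_k -> 'rV[R]_n).

Lemma conv_perturb (l d : 'I_k -> R) (c : R) :
  \sum_i l i = 1 -> \sum_i d i = 0 -> (forall i, 0 <= l i + c * d i) ->
  conv p (\sum_i l i *: p i + c *: \sum_i d i *: p i).
Proof.
move=> l1 d0 H; exists (fun i => l i + c * d i); split => //; split.
  by rewrite big_split /= -mulr_sumr d0 mulr0 addr0.
by rewrite scaler_sumr -big_split; apply: eq_bigr => i _; rewrite scalerDl scalerA.
Qed.

(* A point with a positive weight [l j] can be pushed by [l j] towards and
   away from [p j] inside the hull; extremality then forces it to be [p j]. *)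
Lemma vertex_conv m : vertex (conv p) m -> exists j, m = p j.
Proof.
case=> [[l [l0 [l1 mE]]] extreme].
have [j lj] : exists j, 0 < l j.
  case: (pickP (fun j => 0 < l j)) => [j Hj|H]; first by exists j.
  move: l1; rewrite big1 => [/esym/eqP|i _]; first by rewrite oner_eq0.
  by have := l0 i; rewrite le_eqVlt H orbF => /eqP <-.
have lj1 : l j <= 1.
  by rewrite -l1 (bigD1 j) //= lerDl sumr_ge0 // => i _; exact: l0.
pose d i := (i == j)%:R - l i.
have d0 : \sum_i d i = 0.
  by rewrite /d sumrB l1 (bigD1 j) //= eqxx big1 ?addr0 ?subrr // => i /negbTE ->.
have dE : \sum_i d i *: p i = p j - m.
  rewrite mE /d; under eq_bigr do rewrite scalerBl.
  rewrite sumrB (bigD1 j) //= eqxx scale1r big1 ?addr0 // => i /negbTE ->.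
  by rewrite scale0r.
have push c : -1 <= c -> c <= 1 -> conv p (m + c * l j *: (p j - m)).
  move=> c1 c2; rewrite -dE mE; apply: conv_perturb => // i.
  have lj0 := ltW lj; have li := l0 i.
  rewrite /d; case: eqP => [->|_] /=.
    have : 0 <= (c + 1) * l j * (1 - l j).
      by apply: mulr_ge0; [apply: mulr_ge0|]; lra.
    by nra.
  have : 0 <= l i * ((1 - c) * l j + (1 - l j)).
    by apply: mulr_ge0 => //; apply: addr_ge0; [apply: mulr_ge0|]; lra.
  by nra.
have mid : m = 2^-1 *: ((m + l j *: (p j - m)) + (m + - l j *: (p j - m))).
  by apply/matrixP => i0 j0; rewrite !mxE; field.
have up : conv p (m + l j *: (p j - m)) by rewrite -[l j]mul1r; apply: push; lra.
have down : conv p (m + - l j *: (p j - m)) by rewrite -mulN1r; apply: push; lra.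
move: (extreme _ _ up down mid) => /eqP.
rewrite -subr_eq0 scaleNr opprD opprK addrACA subrr add0r.
rewrite -scalerDr scaler_eq0 (gt_eqF lj) /= -mulr2n -scaler_nat scaler_eq0.
by rewrite pnatr_eq0 /= subr_eq0 => /eqP <-; exists j.
Qed.

Definition sqnorm (y : 'rV[R]_n) := \sum_i y 0 i ^+ 2.

Lemma sqr_wavg_le (l y : 'I_k -> R) : (forall j, 0 <= l j) -> \sum_j l j = 1 ->
  (\sum_j l j * y j) ^+ 2 <= \sum_j l j * y j ^+ 2.
Proof.
move=> l0 l1.
have expand c : \sum_j l j * (y j - c) ^+ 2 =
    \sum_j l j * y j ^+ 2 - (2 * c) * \sum_j l j * y j + c ^+ 2 * \sum_j l j.
  by rewrite !mulr_sumr -sumrB -big_split; apply: eq_bigr => j _ /=; ring.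
have : 0 <= \sum_j l j * (y j - \sum_j l j * y j) ^+ 2.
  by apply: sumr_ge0 => j _; rewrite mulr_ge0 ?sqr_ge0.
by rewrite expand l1; lra.
Qed.

Lemma conv_sqnorm_le x m :
  conv p x -> (forall j, sqnorm (p j) <= sqnorm m) -> sqnorm x <= sqnorm m.
Proof.
move=> [l [l0 [l1 ->]]] H.
apply: (@le_trans _ _ (\sum_j l j * sqnorm (p j))).
  rewrite /sqnorm; under eq_bigr do rewrite summxE.
  under [X in _ <= X]eq_bigr do rewrite mulr_sumr.
  rewrite [X in _ <= X]exchange_big /=; apply: ler_sum => i _.
  under eq_bigr do rewrite mxE.
  exact: sqr_wavg_le.
rewrite -[X in _ <= X]mul1r -l1 mulr_suml; apply: ler_sum => j _.
by rewrite ler_wpM2l.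
Qed.

(* A generator of maximal norm is extreme, by strict convexity of [sqnorm]. *)
Lemma conv_vertex_exists : (0 < k)%N -> exists m, vertex (conv p) m.
Proof.
move=> k0; case: (@arg_maxP _ _ _ (Ordinal k0) xpredT (fun j => sqnorm (p j)) isT).
move=> j0 _ maxj0; exists (p j0); split.
  exists (fun j => (j == j0)%:R); split; first by move=> j; rewrite ler0n.
  split; first by rewrite (bigD1 j0) //= eqxx big1 ?addr0 // => j /negbTE ->.
  rewrite (bigD1 j0) //= eqxx scale1r big1 ?addr0 // => j /negbTE ->.
  by rewrite scale0r.
move=> x y Cx Cy mid.
have Nx := conv_sqnorm_le Cx (fun j => maxj0 j isT).
have Ny := conv_sqnorm_le Cy (fun j => maxj0 j isT).
have parallelogram : sqnorm (x - y) = 2 * (sqnorm x + sqnorm y) - 4 * sqnorm (p j0).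
  have -> : sqnorm (x - y) =
      \sum_i (2 * (x 0 i ^+ 2 + y 0 i ^+ 2) - 4 * (p j0 0 i) ^+ 2).
    by apply: eq_bigr => i _; rewrite mid !mxE; field.
  by rewrite sumrB -!mulr_sumr big_split.
have N0 : sqnorm (x - y) <= 0 by rewrite parallelogram; lra.
have : sqnorm (x - y) = 0.
  by apply/eqP; rewrite eq_le N0 sumr_ge0 // => i _; rewrite sqr_ge0.
rewrite /sqnorm => /eqP; rewrite psumr_eq0 => [/allP xy|i _]; last exact: sqr_ge0.
apply/eqP; rewrite -subr_eq0; apply/eqP/matrixP => i j; rewrite (ord1 i) mxE.
by have := xy j (mem_index_enum _); rewrite /= sqrf_eq0 !mxE => /eqP.
Qed.

End ConvexHull.

Lemma vertex_scale (R : realType) (n : nat) (S S' : set 'rV[R]_n) (c : R) m :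
  c != 0 -> (forall x, S' (c *: x) <-> S x) -> vertex S m -> vertex S' (c *: m).
Proof.
move=> c0 SS' [Sm extreme]; split; first exact/SS'.
have S'S x : S' x -> S (c^-1 *: x) by move=> ?; apply/SS'; rewrite scalerA mulfV ?scale1r.
move=> x y /S'S Sx /S'S Sy mid.
have : c^-1 *: x = c^-1 *: y.
  apply: extreme Sx Sy _; rewrite -scalerDr scalerA mulrC -scalerA -mid.
  by rewrite scalerA mulVf ?scale1r.
by move/(congr1 ( *:%R c)); rewrite !scalerA mulfV ?scale1r.
Qed.

Lemma simplexP (R : realType) (n : nat) (z : 'rV[R]_n) :
  simplex R n z <-> (forall k, 0 <= z 0 k) /\ \sum_k z 0 k <= 1.
Proof.
split.
  case=> l [l0 [l1 ->]].
  have coord k : (\sum_j l j *: @simplex_pts R n j) 0 k = l (lift ord0 k).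
    rewrite summxE big_ord_recl /simplex_pts unlift_none scaler0 mxE add0r.
    rewrite (bigD1 k) //= liftK !mxE !eqxx mulr1 big1 ?addr0 // => j /negbTE jk.
    by rewrite liftK !mxE eq_sym jk mulr0.
  split => [k|]; first by rewrite coord.
  under eq_bigr do rewrite coord.
  by move: l1; rewrite big_ord_recl => <-; rewrite lerDr.
case=> z0 z1.
exists (fun j => if unlift ord0 j is Some k then z 0 k else 1 - \sum_k z 0 k).
split; first by move=> j; case: unliftP => [k|] _ //; rewrite subr_ge0.
split.
  rewrite big_ord_recl unlift_none [X in _ + X](eq_bigr (fun k => z 0 k)) ?subrK //.
  by move=> k _; rewrite liftK.
rewrite big_ord_recl /simplex_pts unlift_none scaler0 add0r.
rewrite (eq_bigr (fun k => z 0 k *: delta_mx 0 k)) -?row_sum_delta // => k _.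
by rewrite liftK.
Qed.

Lemma simplex_lattice_sum (R : realType) (n : nat) (z : 'rV[int]_n) :
  simplex R n (zpt R z) -> z != 0 -> \sum_k z 0 k = 1.
Proof.
move=> /simplexP[z0 z1] nz.
have zk k : 0 <= z 0 k by have := z0 k; rewrite mxE ler0z.
have sum1 : \sum_k z 0 k <= 1.
  by move: z1; under eq_bigr do rewrite mxE; rewrite -rmorph_sum lerz1.
have [k zk0] : exists k, z 0 k != 0.
  apply/existsP; apply: contraR nz => /existsPn z_eq0.
  by apply/eqP/matrixP => i j; rewrite (ord1 i) mxE; apply/eqP/negPn.
apply/le_anti; rewrite sum1 (bigD1 k) //=.
have : 0 <= \sum_(i < n | i != k) z 0 i by apply: sumr_ge0 => i _.
by set S := \sum_(i < n | i != k) _; have := zk k; move: zk0; lia.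
Qed.

Section SmoothPolytope.
Variables (R : realType) (n r : nat) (rho : 'I_r -> 'rV[int]_n) (a : 'I_r -> int).
Hypothesis P_lattice : lattice_polytope (Ppoly R rho a).
Hypothesis P_smooth : smooth R rho a.
Hypothesis rho_primitive : forall i, primitive (rho i).

Local Notation P := (Ppoly R rho a).

Definition slack i (x : 'rV[R]_n) := dotz (rho i) x + (a i)%:~R.
Definition islack (M : 'rV[int]_n) i := idot (rho i) M + a i.
Definition facets (m : 'rV[R]_n) := tight rho (offs a 1 0) m.

Lemma PpolyP x : P x <-> forall i, 0 <= slack i x.
Proof.
rewrite /Ppoly /Hpoly /slack /offs /=.
by split => H i; have := H i; rewrite mul1r subr0; lra.
Qed.

Lemma in_facets m i : (i \in facets m) = (slack i m == 0).
Proof. by rewrite inE /slack /offs mul1r subr0 addr_eq0. Qed.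

Lemma slackD i x y : slack i (x + y) = slack i x + dotz (rho i) y.
Proof. by rewrite /slack dotzD addrAC. Qed.

Lemma dotz_slackB i x y : dotz (rho i) (x - y) = slack i x - slack i y.
Proof. by rewrite /slack dotzB opprD addrACA subrr addr0. Qed.

Lemma slack_zpt i M : slack i (zpt R M) = (islack M i)%:~R.
Proof. by rewrite /slack dotz_zpt intrD. Qed.

Lemma vertex_lattice m : vertex P m -> exists M, m = zpt R M.
Proof.
case: P_lattice => k [V ->] /vertex_conv [j ->].
by exists (V j).
Qed.

Lemma vertex_of_tight (J : {set 'I_r}) z :
  P z -> (forall j, j \in J -> slack j z = 0) ->
  (forall x, (forall j, j \in J -> slack j x = 0) -> x = z) -> vertex P z.
Proof.
move=> Pz zJ zJ_uniq; split => // x y Px Py mid.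
have xyJ j : j \in J -> slack j x = 0 /\ slack j y = 0.
  move=> jJ; have := zJ j jJ.
  have -> : slack j z = 2^-1 * (slack j x + slack j y).
    by rewrite mid /slack dotzZ dotzD; field.
  by have := (PpolyP x).1 Px j; have := (PpolyP y).1 Py j; lra.
by rewrite (zJ_uniq x (fun j jJ => (xyJ j jJ).1)) (zJ_uniq y (fun j jJ => (xyJ j jJ).2)).
Qed.

(* At a smooth lattice vertex [m = M], the [u t] are the basis dual to the
   normals of the facets through [m]; they span the edges of [P] at [m], and
   [frame_edge] says that [m + u t] is still in [P]. *)
Record frame (m : 'rV[R]_n) (M : 'rV[int]_n) (u : 'I_r -> 'rV[int]_n) : Prop :=
  Frame {
  frame_vertex : vertex P m;
  frame_lattice : m = zpt R M;
  frame_card : #|facets m| = n;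
  frame_dual : forall s t, s \in facets m -> t \in facets m ->
    idot (rho s) (u t) = (s == t)%:R;
  frame_coord : forall x, x = \sum_(t in facets m) dotz (rho t) x *: zpt R (u t);
  frame_span : forall v, v = \sum_(t in facets m) idot v (u t) *: rho t;
  frame_edge : forall i t, t \in facets m -> 0 <= islack M i + idot (rho i) (u t) }.

Lemma edge_line m (u : 'I_r -> 'rV[int]_n) t x :
  (forall y, y = \sum_(s in facets m) dotz (rho s) y *: zpt R (u s)) ->
  t \in facets m -> (forall s, s \in facets m -> s != t -> slack s x = 0) ->
  x = m + slack t x *: zpt R (u t).
Proof.
move=> coord tT xT; apply/eqP; rewrite addrC -subr_eq; apply/eqP.
have slack_m s : s \in facets m -> slack s m = 0 by rewrite in_facets => /eqP.
rewrite [LHS]coord (bigD1 t) //= big1 ?addr0.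
  by rewrite dotz_slackB slack_m // subr0.
by move=> s /andP[sT st]; rewrite dotz_slackB xT // slack_m // subrr scale0r.
Qed.

Lemma edge_line_unique m (u : 'I_r -> 'rV[int]_n) t i0 (s : R) x :
  (forall y, y = \sum_(s in facets m) dotz (rho s) y *: zpt R (u s)) ->
  t \in facets m -> dotz (rho i0) (zpt R (u t)) != 0 ->
  slack i0 (m + s *: zpt R (u t)) = 0 -> slack i0 x = 0 ->
  (forall s', s' \in facets m -> s' != t -> slack s' x = 0) ->
  x = m + s *: zpt R (u t).
Proof.
move=> coord tT ci0 hit xi0 xT; have xE := edge_line coord tT xT.
suff <- : slack t x = s by [].
move: xi0 hit; rewrite {1}xE !slackD !dotzZ => xi0 hit.
by apply: (mulIf ci0); lra.
Qed.

(* Walk from [m] along the edge [u t] until the first facet [i0] is hit.  The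
   endpoint is again a vertex, hence a lattice point, so the walk has length at
   least one. *)
Lemma edge_length m M u t :
  vertex P m -> m = zpt R M -> t \in facets m ->
  (forall s, s \in facets m -> idot (rho s) (u t) = (s == t)%:R) ->
  (forall y, y = \sum_(s in facets m) dotz (rho s) y *: zpt R (u s)) ->
  forall i, 0 <= islack M i + idot (rho i) (u t).
Proof.
move=> Vm mE tT dual coord i; rewrite leNgt; apply/negP => i_neg.
set D := islack M; set c := fun j => idot (rho j) (u t).
have D0 j : 0 <= D j by have := (PpolyP m).1 Vm.1 j; rewrite mE slack_zpt ler0z.
have facetsE j : (j \in facets m) = (D j == 0) by rewrite in_facets mE slack_zpt intr_eq0.
have D_facet j : j \in facets m -> D j = 0 by rewrite facetsE => /eqP.
have ci : c i < 0 by have := D0 i; move: i_neg; rewrite -/(D i) -/(c i); lia.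
pose F j : R := (D j)%:~R / (- c j)%:~R.
case: (@arg_minP _ _ _ i (fun j => c j < 0) F ci) => i0 ci0 Fmin.
set s := F i0.
have Di0 : 0 < D i0.
  rewrite lt_def D0 andbT -facetsE; apply: contraTN ci0 => i0T.
  by rewrite /c dual //; case: (i0 == t).
have s_gt0 : 0 < s by rewrite /s /F divr_gt0 // ?ltr0z // oppr_gt0.
have slack_ray j : slack j (m + s *: zpt R (u t)) = (D j)%:~R + s * (c j)%:~R.
  by rewrite slackD mE slack_zpt dotzZ dotz_zpt.
have ray_in j : 0 <= (D j)%:~R + s * (c j)%:~R.
  case: (ltP (c j) 0) => cj.
    by have := Fmin j cj; rewrite -/s /F ler_pdivlMr ?ltr0z ?oppr_gt0 // intrN; lra.
  by apply: addr_ge0; [rewrite ler0z | apply: mulr_ge0; rewrite ?ler0z // ltW].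
have ci0R : ((c i0)%:~R : R) != 0 by rewrite intr_eq0 ltr0_neq0.
have exit : slack i0 (m + s *: zpt R (u t)) = 0.
  by rewrite slack_ray /s /F intrN; field.
have endpoint : vertex P (m + s *: zpt R (u t)).
  apply: (vertex_of_tight (J := i0 |: (facets m :\ t))).
  - by apply/PpolyP => j; rewrite slack_ray.
  - move=> j /setU1P[-> //|/setD1P[jt jT]].
    by rewrite slack_ray D_facet // /c dual // (negbTE jt) mulr0 addr0.
  - move=> x xJ; apply: (edge_line_unique coord tT _ exit (xJ i0 (setU11 _ _))).
      by rewrite dotz_zpt.
    by move=> s' s'T s't; apply: xJ; rewrite setU1r // in_setD1 s't.
have [E eE] := vertex_lattice endpoint.
have sE : s = (islack E t)%:~R.
  by rewrite -slack_zpt -eE slack_ray D_facet // /c dual // eqxx add0r mulr1.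
have s1 : 1 <= s by move: s_gt0; rewrite sE ltr0z ler1z.
have := ray_in i; move: i_neg; rewrite -/(D i) -/(c i) -(ltrz0 R) intrD.
have : ((c i)%:~R : R) < 0 by rewrite ltrz0.
nra.
Qed.

Lemma vertex_frame m : vertex P m -> exists M u, frame m M u.
Proof.
move=> Vm; have [M mE] := vertex_lattice Vm.
have [card_n basis] := P_smooth Vm.
have [u [dual coord span]] := Zbasis_dual R basis.
exists M, u; split => // i t tT.
by apply: (edge_length Vm mE tT) => // s sT; apply: dual.
Qed.

Section Frame.
Variables (m : 'rV[R]_n) (M : 'rV[int]_n) (u : 'I_r -> 'rV[int]_n).
Hypothesis fr : frame m M u.

Lemma islack_ge0 i : 0 <= islack M i.
Proof.
by have := (PpolyP m).1 (frame_vertex fr).1 i; rewrite (frame_lattice fr) slack_zpt ler0z.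
Qed.

Lemma in_facetsE i : (i \in facets m) = (islack M i == 0).
Proof. by rewrite in_facets [in slack _ _](frame_lattice fr) slack_zpt intr_eq0. Qed.

Lemma islack_facet i : i \in facets m -> islack M i = 0.
Proof. by rewrite in_facetsE => /eqP. Qed.

Lemma sum_dual_facet i : i \in facets m ->
  \sum_(t in facets m) idot (rho i) (u t) = 1.
Proof.
move=> iT; rewrite (bigD1 i) //= (frame_dual fr) // eqxx big1 ?addr0 //.
by move=> t /andP[tT ti]; rewrite (frame_dual fr) // eq_sym (negbTE ti).
Qed.

Lemma edge_dual_ge i t : t \in facets m -> - islack M i <= idot (rho i) (u t).
Proof. by move=> tT; have := frame_edge fr i tT; lia. Qed.

Lemma frame_ineq_succn i :
  1 <= n.+1%:Z * islack M i + \sum_(t in facets m) idot (rho i) (u t).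
Proof.
case: (boolP (i \in facets m)) => iT.
  by rewrite (sum_dual_facet iT) (islack_facet iT) mulr0 add0r.
have D1 : 1 <= islack M i by have := islack_ge0 i; rewrite in_facetsE in iT; lia.
have : \sum_(t in facets m) - islack M i <= \sum_(t in facets m) idot (rho i) (u t).
  by apply: ler_sum => t tT; exact: edge_dual_ge.
rewrite sumr_const (frame_card fr) -mulr_natr; lia.
Qed.

(* Every edge [[m, m + u t]] ends on the facet [i]. *)
Definition opposite i := forall t, t \in facets m -> idot (rho i) (u t) = - islack M i.

Lemma frame_ineq_n i : ~ opposite i ->
  1 <= n%:Z * islack M i + \sum_(t in facets m) idot (rho i) (u t).
Proof.
move=> not_opp; case: (boolP (i \in facets m)) => iT.
  by rewrite (sum_dual_facet iT) (islack_facet iT) mulr0 add0r.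
have D1 : 1 <= islack M i by have := islack_ge0 i; rewrite in_facetsE in iT; lia.
have [t0 t0T ct0] : exists2 t0, t0 \in facets m & idot (rho i) (u t0) != - islack M i.
  apply/exists_inP; apply: contra_notT not_opp => /exists_inPn eq_opp t tT.
  by apply/eqP; rewrite -[_ == _]negbK eq_opp.
have : \sum_(t in facets m) - islack M i + 1 <= \sum_(t in facets m) idot (rho i) (u t).
  rewrite (bigD1 t0) // [X in _ <= X](bigD1 t0) //= addrAC lerD //.
    by have := edge_dual_ge i t0T; move: ct0; lia.
  by apply: ler_sum => t /andP[tT _]; exact: edge_dual_ge.
rewrite sumr_const (frame_card fr) -mulr_natr; lia.
Qed.

Lemma opposite_normalZ i : opposite i ->
  rho i = - islack M i *: \sum_(t in facets m) rho t.
Proof.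
move=> opp; rewrite {1}(frame_span fr (rho i)) scaler_sumr.
by apply: eq_bigr => t tT; rewrite opp.
Qed.

Lemma opposite_islack i : opposite i -> islack M i = 1.
Proof.
move=> opp; have dvd j : (islack M i %| rho i ord0 j)%Z.
  by rewrite (opposite_normalZ opp) mxE mulNr -mulrN dvdz_mulr.
by have := rho_primitive dvd; rewrite ger0_norm ?islack_ge0.
Qed.

Lemma opposite_normal i : opposite i -> rho i = - \sum_(t in facets m) rho t.
Proof.
by move=> opp; rewrite {1}(opposite_normalZ opp) (opposite_islack opp) scaleN1r.
Qed.

Lemma opposite_offset i : opposite i -> a i + \sum_(t in facets m) a t = 1.
Proof.
move=> opp; rewrite -(opposite_islack opp).
have a_facet t : t \in facets m -> a t = - idot (rho t) M.
  by move=> tT; apply/eqP; rewrite -addr_eq0 addrC; apply/eqP; exact: islack_facet.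
rewrite (eq_bigr _ a_facet) sumrN -idot_suml /islack (opposite_normal opp).
by rewrite -scaleN1r idotZl mulN1r addrC.
Qed.

Lemma opposite_dotz_sum i (x : 'rV[R]_n) : opposite i ->
  dotz (rho i) x + \sum_(t in facets m) dotz (rho t) x = 0.
Proof. by move=> opp; rewrite (opposite_normal opp) dotzNl dotz_suml addNr. Qed.

Lemma opposite_slack_sum i (x : 'rV[R]_n) : opposite i ->
  slack i x + \sum_(t in facets m) slack t x = 1.
Proof.
move=> opp; rewrite /slack big_split /= addrACA (opposite_dotz_sum x opp) add0r.
by rewrite -rmorph_sum -intrD (opposite_offset opp).
Qed.

Lemma opposite_Hpoly_lb i (p b : R) x :
  opposite i -> Hpoly rho (offs a p b) x -> n.+1%:R * b <= p.
Proof.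
move=> opp Hx; have HxE j : b <= dotz (rho j) x + p * (a j)%:~R.
  by have := Hx j; rewrite /offs; lra.
have : \sum_(t in facets m) b <= \sum_(t in facets m) (dotz (rho t) x + p * (a t)%:~R).
  by apply: ler_sum => t _.
rewrite sumr_const (frame_card fr) big_split /= -mulr_sumr.
have := HxE i; have := opposite_dotz_sum x opp.
have : p * (a i)%:~R + p * \sum_(t in facets m) (a t)%:~R = p.
  by rewrite -mulrDr -rmorph_sum -intrD (opposite_offset opp) mulr1.
rewrite mulrSr mulrDl mul1r mulr_natl; lra.
Qed.

Definition facet_enum (k : 'I_n) : 'I_r := enum_val (cast_ord (esym (frame_card fr)) k).

Lemma facet_enumP k : facet_enum k \in facets m.
Proof. exact: enum_valP. Qed.

Lemma facet_enum_inj : injective facet_enum.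
Proof. by move=> k1 k2 /enum_val_inj /cast_ord_inj. Qed.

Lemma sum_facet_enum (F : 'I_r -> R) :
  \sum_(k < n) F (facet_enum k) = \sum_(t in facets m) F t.
Proof. by rewrite [RHS]big_enum_val (big_cast_ord (frame_card fr)). Qed.

Definition facet_matrix : 'M[int]_n := \matrix_(j, k) rho (facet_enum k) 0 j.
Definition facet_offsets : 'rV[int]_n := \row_k a (facet_enum k).

Lemma facet_matrix_unit : facet_matrix \in unitmx.
Proof.
pose W : 'M[int]_n := \matrix_(k, j) u (facet_enum k) 0 j.
suff /mulmx1_unit[] : W *m facet_matrix = 1%:M by [].
apply/matrixP => k l; rewrite !mxE -(inj_eq facet_enum_inj) eq_sym.
rewrite -(frame_dual fr (facet_enumP l) (facet_enumP k)); apply: eq_bigr => j _.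
by rewrite !mxE mulrC.
Qed.

Lemma facet_coordE x k :
  (x *m map_mx (fun k : int => k%:~R) facet_matrix + zpt R facet_offsets) 0 k =
  slack (facet_enum k) x.
Proof.
rewrite !mxE /slack /dotz; congr (_ + _).
by apply: eq_bigr => j _; rewrite !mxE mulrC.
Qed.

(* The affine map [x |-> (slack t x)_t] is unimodular, and by
   [opposite_slack_sum] its image is cut out by the inequalities of the
   simplex. *)
Lemma opposite_lattice_equiv i : opposite i -> lattice_equiv P (simplex R n).
Proof.
move=> opp; exists facet_matrix, facet_offsets; split; first exact: facet_matrix_unit.
apply/seteqP; split.
  move=> _ [x Px <-]; apply/simplexP; split => [k|].
    by rewrite facet_coordE; exact: (PpolyP x).1 Px _.
  under eq_bigr do rewrite facet_coordE.
  rewrite (sum_facet_enum (slack^~ x)).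
  by have := opposite_slack_sum x opp; have := (PpolyP x).1 Px i; lra.
move=> z /simplexP [z0 z1].
pose x := m + \sum_(k < n) z 0 k *: zpt R (u (facet_enum k)).
have slack_x j : slack j x = (islack M j)%:~R +
    \sum_(k < n) z 0 k * (idot (rho j) (u (facet_enum k)))%:~R.
  rewrite /x slackD dotz_sum (frame_lattice fr) slack_zpt.
  by congr (_ + _); apply: eq_bigr => k _; rewrite dotzZ dotz_zpt.
exists x.
  apply/PpolyP => j; rewrite slack_x.
  have -> : (islack M j)%:~R + \sum_(k < n) z 0 k * (idot (rho j) (u (facet_enum k)))%:~R =
      (1 - \sum_k z 0 k) * (islack M j)%:~R +
      \sum_(k < n) z 0 k * (islack M j + idot (rho j) (u (facet_enum k)))%:~R.
    rewrite mulrBl mul1r mulr_suml -addrA; congr (_ + _).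
    by rewrite -sumrN -big_split; apply: eq_bigr => k _ /=; rewrite intrD; ring.
  apply: addr_ge0; first by rewrite mulr_ge0 ?subr_ge0 // ler0z islack_ge0.
  by apply: sumr_ge0 => k _; rewrite mulr_ge0 // ler0z (frame_edge fr) ?facet_enumP.
apply/matrixP => o l; rewrite (ord1 o) facet_coordE slack_x.
rewrite (islack_facet (facet_enumP l)) add0r (bigD1 l) //=.
rewrite (frame_dual fr) ?facet_enumP // eqxx mulr1 big1 ?addr0 // => k /negbTE kl.
by rewrite (frame_dual fr) ?facet_enumP // (inj_eq facet_enum_inj) eq_sym kl mulr0.
Qed.

Definition vertex_shift (p b : R) := p *: m + b *: \sum_(t in facets m) zpt R (u t).

Lemma dotz_vertex_shift (p b : R) i :
  dotz (rho i) (vertex_shift p b) =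
  p * (idot (rho i) M)%:~R + b * (\sum_(t in facets m) idot (rho i) (u t))%:~R.
Proof.
rewrite /vertex_shift dotzD !dotzZ dotz_sum [in dotz _ m](frame_lattice fr) dotz_zpt.
congr (_ + _ * _); rewrite [RHS]rmorph_sum.
by apply: eq_bigr => t _; rewrite dotz_zpt.
Qed.

Lemma vertex_shift_unique (p b : R) y :
  (forall t, t \in facets m -> dotz (rho t) y = - offs a p 0 t + b) ->
  y = vertex_shift p b.
Proof.
move=> yT; rewrite /vertex_shift -[y](subrK (p *: m)) addrC; congr (_ + _).
rewrite [LHS](frame_coord fr) scaler_sumr; apply: eq_bigr => t tT.
have mt : dotz (rho t) m = - (a t)%:~R.
  by move: tT; rewrite in_facets /slack addr_eq0 => /eqP.
by rewrite dotzB dotzZ yT // mt /offs subr0 mulrN opprK; congr (_ *: _); ring.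
Qed.

Lemma vertex_shift_Hpoly (p b : R) :
  Hpoly rho (offs a p b) (vertex_shift p b) <->
  forall i, b <= p * (islack M i)%:~R +
                 b * (\sum_(t in facets m) idot (rho i) (u t))%:~R.
Proof.
rewrite /Hpoly /offs; split => H i; have := H i;
  by rewrite dotz_vertex_shift /islack intrD mulrDr; lra.
Qed.

(* Without opposite facets, [m + s * sum_t u t] stays in [P] slightly beyond
   the hyperplane [s = 1/n], by [frame_ineq_n]. *)
Lemma frame_push : (0 < n)%N -> (forall i, ~ opposite i) ->
  exists s : R, 1 < s * n%:R /\ P (vertex_shift 1 s).
Proof.
move=> n0 not_opp.
set K : R := 1 + \sum_i (islack M i)%:~R.
have islack_le i : (islack M i)%:~R <= K - 1.
  rewrite /K (addrC 1) addrK (bigD1 i) //= lerDl sumr_ge0 // => j _.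
  by rewrite ler0z islack_ge0.
have K1 : 1 <= K by rewrite /K lerDl sumr_ge0 // => j _; rewrite ler0z islack_ge0.
set nR : R := n%:R; have nR0 : 0 < nR by rewrite ltr0n.
set d := (nR * K)^-1; have d0 : 0 < d by rewrite invr_gt0 mulr_gt0 //; lra.
set s := (1 + d) / nR; have s0 : 0 <= s by rewrite divr_ge0 //; lra.
have snR : s * nR = 1 + d by rewrite mulrVK ?unitfE ?gt_eqF.
have sdK : s - d * K = d / nR.
  by rewrite /s /d; field; rewrite (gt_eqF nR0) /=; lra.
exists s; split; first by rewrite snR; lra.
apply/PpolyP => i; rewrite /slack dotz_vertex_shift mul1r addrAC -intrD.
set C := ((\sum_(t in facets m) idot (rho i) (u t))%:~R : R).
set D := ((islack M i)%:~R : R).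
have C_ge : 1 - nR * D <= C.
  have := frame_ineq_n (not_opp i); rewrite -(ler_int R) intrD intrM -!pmulrn.
  by rewrite -/C -/D; lra.
have : s * (1 - nR * D) <= s * C by rewrite ler_wpM2l.
have -> : s * (1 - nR * D) = s - (1 + d) * D by rewrite mulrBr mulr1 mulrA snR.
have : d * D <= d * (K - 1) by apply: ler_wpM2l; [exact: ltW | exact: islack_le].
have : 0 <= d / nR by rewrite divr_ge0 ?ltW.
have : 0 <= D by rewrite ler0z islack_ge0.
lra.
Qed.

End Frame.

Lemma Hpoly_scale (p : R) x : 0 < p -> Hpoly rho (offs a p 0) (p *: x) <-> P x.
Proof.
move=> p0; rewrite PpolyP /Hpoly /offs /slack.
by split => H i; have := H i; rewrite dotzZ subr0 -mulrN ler_pM2l //; lra.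
Qed.

Lemma facets_scale (p : R) m i : 0 < p ->
  (i \in tight rho (offs a p 0) (p *: m)) = (i \in facets m).
Proof.
move=> p0; rewrite !inE /offs dotzZ mul1r !subr0 -mulrN.
by rewrite (inj_eq (mulfI _)) // gt_eqF.
Qed.

(* The vertices of [pP] are the [p m]; at [p m], the point [m(b)] of the
   definition is [vertex_shift m u p b]. *)
Lemma spannedP (p b : R) : 0 < p ->
  spanned rho (offs a p 0) b <->
  forall m M u, frame m M u -> Hpoly rho (offs a p b) (vertex_shift m u p b).
Proof.
move=> p0; have pn : p != 0 by rewrite gt_eqF.
split=> [span m M u fr | H m' Vm' y yT].
  have Vpm := vertex_scale (S' := Hpoly rho (offs a p 0)) pn
    (fun x => Hpoly_scale x p0) (frame_vertex fr).
  move=> i; have := span _ Vpm _ _ i; rewrite /offs subr0; apply.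
  move=> t; rewrite facets_scale // => tT.
  rewrite (dotz_vertex_shift fr) (sum_dual_facet fr tT) mulr1.
  move: tT; rewrite (in_facetsE fr) /islack addr_eq0 => /eqP ->.
  by rewrite /offs subr0 intrN mulrN.
have down x : P (p^-1 *: x) <-> Hpoly rho (offs a p 0) x.
  by have := Hpoly_scale (p^-1 *: x) p0; rewrite scalerKV // => -[? ?]; split.
have [M [u fr]] := vertex_frame (vertex_scale (invr_neq0 pn) down Vm').
have m'E : m' = p *: (p^-1 *: m') by rewrite scalerKV.
rewrite (@vertex_shift_unique _ _ _ fr p b y) => [i|t tT]; last first.
  by apply: yT; rewrite m'E facets_scale.
by have := H _ _ _ fr i; rewrite /offs subr0.
Qed.

Lemma spanned_succn : spanned rho (offs a (n.+1%:R : R) 0) 1.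
Proof.
apply/spannedP => [|m M u fr]; first exact: ltr0Sn.
apply/(vertex_shift_Hpoly fr) => i.
by have := frame_ineq_succn fr i; rewrite -(ler_int R) intrD intrM mul1r.
Qed.

Lemma spanned_n : (0 < n)%N -> ~ lattice_equiv P (simplex R n) ->
  spanned rho (offs a (n%:R : R) 0) 1.
Proof.
move=> n0 not_equiv; apply/spannedP => [|m M u fr]; first by rewrite ltr0n.
apply/(vertex_shift_Hpoly fr) => i.
have not_opp : ~ opposite m M u i.
  by move=> opp; apply: not_equiv; exact: opposite_lattice_equiv opp.
by have := frame_ineq_n fr not_opp; rewrite -(ler_int R) intrD intrM mul1r.
Qed.

Lemma P_vertex : (exists x, P x) -> exists m, vertex P m.
Proof.
case: P_lattice => k [V ->] [x Px].
case: k V Px => [|k] V Px; last exact: conv_vertex_exists.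
by case: Px => l [_ [l1 _]]; move: l1; rewrite big_ord0 => /eqP; rewrite eq_sym oner_eq0.
Qed.

(* The preimage [m] of the vertex [0] of the simplex is a vertex of [P], and
   the linear part of the equivalence maps [P - m] into the simplex. *)
Lemma lattice_equiv_simplex_vertex : lattice_equiv P (simplex R n) ->
  exists m (U : 'M[int]_n), [/\ vertex P m, U \in unitmx &
    forall v, P (m + v) -> simplex R n (v *m map_mx (fun k : int => k%:~R) U)].
Proof.
move=> [U [tv [U_unit img]]].
set UR := map_mx (fun k : int => (k%:~R : R)) U.
pose f x := x *m UR + zpt R tv.
have fP x : P x -> simplex R n (f x) by move=> Px; rewrite -img; exists x.
have [m Pm fm] : exists2 m, P m & f m = 0.
  have : simplex R n 0.
    by apply/simplexP; split => [k|]; rewrite ?mxE // big1 // => k _; rewrite mxE.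
  by rewrite -img => -[m Pm fm]; exists m.
have fD x v : f (x + v) = f x + v *m UR by rewrite /f mulmxDl addrAC.
have f_inj : injective f.
  move=> x y /addIr /(congr1 (mulmx^~ (map_mx (fun k : int => k%:~R) (invmx U)))).
  by rewrite -!mulmxA -map_mxM mulmxV // map_mx1 !mulmx1.
exists m, U; split => // [|v /fP]; last by rewrite fD fm add0r.
split => // x y Px Py mid.
have fxy : f x + f y = 0.
  have : f m = 2^-1 *: (f x + f y).
    rewrite mid /f -scalemxAl mulmxDl [in RHS]addrACA [in RHS]scalerDr; congr (_ + _).
    by rewrite -mulr2n -scaler_nat scalerA mulVf ?pnatr_eq0 // scale1r.
  by rewrite fm => /esym/eqP; rewrite scaler_eq0 invr_eq0 pnatr_eq0 => /eqP.
apply: f_inj; have [fx0 _] := (simplexP (f x)).1 (fP _ Px).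
have [fy0 _] := (simplexP (f y)).1 (fP _ Py).
apply/matrixP => o k; rewrite (ord1 o).
have := congr1 (fun A : 'rV[R]_n => A 0 k) fxy; rewrite /= mxE [X in _ = X]mxE.
by have := fx0 k; have := fy0 k; lra.
Qed.

Lemma lattice_equiv_opposite : (0 < n)%N -> lattice_equiv P (simplex R n) ->
  exists m M u i, frame m M u /\ opposite m M u i.
Proof.
move=> n0 /lattice_equiv_simplex_vertex [m [U [Vm U_unit toS]]].
have [M [u fr]] := vertex_frame Vm; exists m, M, u.
apply: contrapT => no_opp.
have not_opp i : ~ opposite m M u i by move=> opp; apply: no_opp; exists i.
have edge_sum t : t \in facets m -> \sum_k (u t *m U) 0 k = 1.
  move=> tT; apply: (simplex_lattice_sum (R := R)).
    rewrite -zpt_mulmx; apply/toS/PpolyP => i.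
    by rewrite slackD (frame_lattice fr) slack_zpt dotz_zpt -intrD ler0z (frame_edge fr).
  apply/eqP => uU0; have ut0 : u t = 0.
    by rewrite -[u t]mulmx1 -(mulmxV U_unit) mulmxA uU0 mul0mx.
  have := frame_dual fr tT tT; rewrite ut0 eqxx /idot big1 => [|j _]; last first.
    by rewrite mxE mulr0.
  by move/eqP; rewrite eq_sym oner_eq0.
have [s [sn]] := frame_push fr n0 not_opp.
rewrite /vertex_shift scale1r => /toS /simplexP[_].
rewrite -scalemxAl mulmx_suml; under eq_bigr do rewrite mxE summxE.
rewrite -mulr_sumr exchange_big /= (eq_bigr (fun=> 1)) => [|t tT].
  by rewrite sumr_const (frame_card fr); lra.
by under eq_bigr do rewrite zpt_mulmx mxE; rewrite -rmorph_sum edge_sum.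
Qed.

Lemma tau_le (p b : nat) : (0 < p)%N -> (0 < b)%N ->
  spanned rho (offs a (p%:R : R) 0) b%:R -> tau R rho a <= p%:R / b%:R.
Proof.
move=> p0 b0 span; apply: ge_inf; last by exists p, b.
by exists 0 => _ [p' [b' [_ [_ [-> _]]]]]; rewrite divr_ge0.
Qed.

Lemma codegQ_le_tau : (exists x, P x) -> codegQ R rho a <= tau R rho a.
Proof.
move=> /P_vertex[m /vertex_frame[M [u fr]]].
apply: lb_le_inf => [|_ [p [b [p0 [b0 [-> span]]]]]].
  by exists n.+1%:R, n.+1, 1%N; rewrite divr1; do 3!split => //; exact: spanned_succn.
apply: ge_inf; first by exists 0 => _ [p' [b' [_ [_ [-> _]]]]]; rewrite divr_ge0.
exists p, b; do 3!split => //; exists (vertex_shift m u p%:R b%:R).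
have p0R : (0 : R) < p%:R by rewrite ltr0n.
exact: (spannedP _ p0R).1 span _ _ _ fr.
Qed.

Lemma vertex_shift_succn m M u : frame m M u ->
  Hpoly rho (offs a (n.+1%:R : R) 1) (vertex_shift m u n.+1%:R 1).
Proof. exact: (spannedP _ (ltr0Sn _ _)).1 spanned_succn m M u. Qed.

Lemma codeg_witness m M u : frame m M u ->
  Hpoly rho (offs a (n.+1%:R : R) 1) (zpt R (n.+1%:Z *: M + \sum_(t in facets m) u t)).
Proof.
move=> fr; have := vertex_shift_succn fr.
by rewrite /vertex_shift zptD zptZ zpt_sum -(frame_lattice fr) scale1r.
Qed.

Lemma codegQ_ge_succn m M u i : frame m M u -> opposite m M u i ->
  n.+1%:R <= codegQ R rho a.
Proof.
move=> fr opp; apply: lb_le_inf => [|_ [p [b [_ [b0 [-> [x Hx]]]]]]].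
  exists n.+1%:R, n.+1, 1%N; rewrite divr1; do 3!split => //.
  by exists (vertex_shift m u n.+1%:R 1); exact: vertex_shift_succn fr.
by have := opposite_Hpoly_lb fr opp Hx; rewrite ler_pdivlMr ?ltr0n.
Qed.

Lemma codeg_le_succn : (exists x, P x) -> codeg R rho a <= n.+1%:R.
Proof.
move=> /P_vertex[m /vertex_frame[M [u fr]]].
apply: ge_inf; first by exists 0 => _ [k [-> _]].
exists n.+1; split => //.
by exists (n.+1%:Z *: M + \sum_(t in facets m) u t); exact: codeg_witness fr.
Qed.

Lemma codeg_ge_succn m M u i : frame m M u -> opposite m M u i ->
  n.+1%:R <= codeg R rho a.
Proof.
move=> fr opp; apply: lb_le_inf => [|_ [k [-> [z Hz]]]].
  exists n.+1%:R, n.+1; split => //.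
  by exists (n.+1%:Z *: M + \sum_(t in facets m) u t); exact: codeg_witness fr.
by have := opposite_Hpoly_lb fr opp Hz; rewrite mulr1.
Qed.

End SmoothPolytope.

Theorem corollary2p3 (R : realType) (n r : nat) (rho : 'I_r -> 'rV[int]_n)
    (a : 'I_r -> int) :
  (0 < n)%N ->
  facet_presentation R rho a ->
  full_dim R rho a ->
  lattice_polytope (Ppoly R rho a) ->
  smooth R rho a ->
  ((codeg R rho a = n.+1%:R /\ codegQ R rho a = n.+1%:R /\ tau R rho a = n.+1%:R)
     <-> lattice_equiv (Ppoly R rho a) (simplex R n)) /\
  (~ lattice_equiv (Ppoly R rho a) (simplex R n) ->
     codegQ R rho a <= tau R rho a /\ tau R rho a <= n%:R).
Proof.
move=> n0 [prim _] [x0 x0_int] lat sm.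
have P_ne : exists x, Ppoly R rho a x.
  by exists x0; apply/PpolyP => i; have := x0_int i; rewrite /slack; lra.
have codegQ_tau := codegQ_le_tau lat sm P_ne.
have tau_le_n : ~ lattice_equiv (Ppoly R rho a) (simplex R n) -> tau R rho a <= n%:R.
  move=> not_eqv; have := tau_le n0 (ltn0Sn 0) (spanned_n lat sm prim n0 not_eqv).
  by rewrite divr1.
split=> [|/tau_le_n //]; split=> [[_ [_ tau_eq]]|eqv].
  by apply: contrapT => /tau_le_n; rewrite tau_eq ler_nat ltnn.
have [m [M [u [i [fr opp]]]]] := lattice_equiv_opposite lat sm n0 eqv.
have tau_le_succn : tau R rho a <= n.+1%:R.
  by have := tau_le (ltn0Sn n) (ltn0Sn 0) (spanned_succn lat sm); rewrite divr1.
have codegQ_ge := codegQ_ge_succn lat sm prim fr opp.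
have codegQ_le := le_trans codegQ_tau tau_le_succn.
have codeg_ge := codeg_ge_succn lat sm prim fr opp.
split; first by apply/le_anti; rewrite codeg_le_succn // codeg_ge.
split; apply/le_anti; first by rewrite codegQ_le codegQ_ge.
by rewrite tau_le_succn (le_trans codegQ_ge codegQ_tau).
Qed.
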